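(* $\mathrm{LIM}_{\operatorname{non}(\mathcal N)}(\mathcal L)\supsetneq\mathcal L$; that is, there is a $\operatorname{non}(\mathcal N)$-sequence of Lebesgue measurable functions $\mathbb R\to\mathbb R$ converging pointwise to a function that is not Lebesgue measurable.
   Context: $\mathcal L$ is the family of Lebesgue measurable functions $\mathbb R\to\mathbb R$. For an infinite cardinal $\kappa$, a $\kappa$-sequence $(f_\alpha)_{\alpha<\kappa}$ of real functions converges pointwise to $f$ if for every $x$ and every $\varepsilon>0$ there is $\alpha_0<\kappa$ with $|f_\alpha(x)-f(x)|<\varepsilon$ for all $\alpha_0<\alpha<\kappa$; $\mathrm{LIM}_\kappa(\mathcal F)$ is the set of all pointwise limits of $\kappa$-sequences of elements of $\mathcal F$. $\operatorname{non}(\mathcal N)$ is the least cardinality of a non-null subset of $[0,1]$. *)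

From HB Require Import structures.
From mathcomp Require Import all_boot all_order all_algebra.
From mathcomp Require Import all_classical all_reals all_analysis.
Set Implicit Arguments.
Unset Strict Implicit.
Unset Printing Implicit Defensive.
Import Order.TTheory GRing.Theory Num.Theory.
Import numFieldNormedType.Exports.
Local Open Scope classical_set_scope.
Local Open Scope ring_scope.

(* The real line with the Lebesgue (completed, = Caratheodory) sigma-algebra;
   its measure is [completed_lebesgue_measure]. *)
Definition LebesgueR (R : realType) :=
  caratheodory_type (@wlength R idfun)^*%mu.

Definition lebesgue_measurable_fun (R : realType) (f : R -> R) : Prop :=
  measurable_fun [set: LebesgueR R] (f : LebesgueR R -> R).

Definition non_null01 (R : realType) (A : set R) : Prop :=
  A `<=` `[0%R, 1%R] /\ ~ (@lebesgue_measure R).-negligible A.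

Definition strict_wellorder (I : Type) (r : I -> I -> Prop) : Prop :=
  (forall x, ~ r x x) /\
  (forall x y z, r x y -> r y z -> r x z) /\
  (forall x y, x = y \/ r x y \/ r y x) /\
  well_founded r.

(* (I, r) has order type the initial ordinal non(N): r is a well-order,
   |I| = non(N) (I is equinumerous with some non-null subset of [0,1] and
   injects into every non-null subset of [0,1]), and every proper initial
   segment of I has cardinality < |I|. *)
Definition order_type_nonN (R : realType) (I : Type) (r : I -> I -> Prop)
  : Prop :=
  strict_wellorder r /\
  (exists A : set R, non_null01 A /\ ([set: I] #= A)%card) /\
  (forall B : set R, non_null01 B -> ([set: I] #<= B)%card) /\
  (forall i : I, ~ ([set: I] #<= [set j | r j i])%card).

Definition wo_pointwise_cvg (R : realType) (I : Type) (r : I -> I -> Prop)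
  (f : I -> R -> R) (g : R -> R) : Prop :=
  forall (x : R) (e : R), 0 < e ->
    exists i0 : I, forall i : I, r i0 i -> `|f i x - g x| < e.

(* LIM_kappa(L), kappa being the order type of (I, r) *)
Definition LIM_L (R : realType) (I : Type) (r : I -> I -> Prop)
  (g : R -> R) : Prop :=
  exists f : I -> R -> R,
    (forall i, lebesgue_measurable_fun (f i)) /\ wo_pointwise_cvg r f g.

From HB Require Import structures.
From mathcomp Require Import all_boot all_order all_algebra all_classical all_reals all_analysis.
From mathcomp Require wochoice.
From mathcomp Require Import measurable_realfun.
From mathcomp Require Import ring lra.
Set Implicit Arguments.
Unset Strict Implicit.
Unset Printing Implicit Defensive.
Import Order.TTheory GRing.Theory Num.Theory.
Import numFieldNormedType.Exports.
Local Open Scope classical_set_scope.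
Local Open Scope ring_scope.

(* Well-order R and call t short when no non-null subset of [0,1] injects into
   the initial segment below t.  A greedy transfinite recursion injects the
   short points into every non-null set, and a least non-short point yields a
   non-null B0 injecting into the short points; so the short points, ordered by
   the well-order, have order type non(N).  Fix an injection psi of B0 into
   them and, by a Vitali argument, a non-measurable X inside B0.  For each short
   i the set of x in X with psi x below i injects below i, hence is null, so its
   indicator is measurable; these indicators converge pointwise to that of X. *)

Section lebesgue_translation.
Variable R : realType.

Definition lebesgue_outer : set R -> \bar R := ((@wlength R idfun)^*)%mu.
Local Notation lambda := lebesgue_outer.

Lemma measurable_caratheodoryE (A : set R) :
  measurable (A : set (LebesgueR R)) <-> caratheodory_measurable lambda A.
Proof. by []. Qed.

Definition translate (c : R) (A : set R) : set R := [set y | A (y - c)].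

Lemma translateK (c : R) (A : set R) : translate (- c) (translate c A) = A.
Proof. by apply/funext => y; rewrite /translate /= opprK addrK. Qed.

Lemma translateNK (c : R) (A : set R) : translate c (translate (- c) A) = A.
Proof. by rewrite -{1}(opprK c) translateK. Qed.

Lemma translate_itv (c a b : R) :
  translate c `]a, b]%classic = `]a + c, b + c]%classic.
Proof.
apply/funext => y; apply/propext.
by rewrite /translate /= !in_itv /= ltrBrDr lerBlDr.
Qed.

Lemma translate_ocitv (c : R) (F : set (ocitv_type R)) : measurable F ->
  measurable (translate c F : set (ocitv_type R)) /\
  wlength idfun (translate c F : set (ocitv_type R)) = wlength idfun F.
Proof.
move=> /ocitvP[->|[x x12 ->]].
  have -> : translate c set0 = set0 by apply/funext.
  by split => //; exact: measurable0.
rewrite translate_itv; split; first exact: is_ocitv.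
by rewrite !wlength_itv_bnd ?lerD2r ?ltW //= opprD addrACA subrr addr0.
Qed.

Lemma le_outer_translate (c : R) (A : set R) :
  (lambda (translate c A) <= lambda A)%E.
Proof.
apply: ereal_inf_le_tmp => _ [F [mF AF] <-].
exists (fun k => translate c (F k)).
  split=> [k|y /AF[k _ Fk]]; last by exists k.
  exact: (translate_ocitv c (mF k)).1.
by apply: eq_eseriesr => k _; exact: (translate_ocitv c (mF k)).2.
Qed.

Lemma outer_translate (c : R) (A : set R) : lambda (translate c A) = lambda A.
Proof.
apply/eqP; rewrite eq_le le_outer_translate /=.
by rewrite -{1}(translateK c A) le_outer_translate.
Qed.

Lemma measurable_translate (c : R) (A : set R) :
  measurable (A : set (LebesgueR R)) ->
  measurable (translate c A : set (LebesgueR R)).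
Proof.
move=> /measurable_caratheodoryE mA; apply/measurable_caratheodoryE => X.
have -> : X `&` translate c A = translate c (translate (- c) X `&` A).
  by rewrite -[in LHS](translateNK c X).
have -> : X `&` ~` translate c A = translate c (translate (- c) X `&` ~` A).
  by rewrite -[in LHS](translateNK c X).
by rewrite !outer_translate -(mA (translate (- c) X)) outer_translate.
Qed.

End lebesgue_translation.

Section vitali_set.
Variable R : realType.
Local Notation lambda := (@lebesgue_outer R).

Lemma rationalB (a b : R) : rational a -> rational b -> rational (a - b).
Proof. by move=> [p _ <-] [q _ <-]; exists (p - q); rewrite ?rmorphB. Qed.

Lemma rationalD (a b : R) : rational a -> rational b -> rational (a + b).
Proof. by move=> [p _ <-] [q _ <-]; exists (p + q); rewrite ?rmorphD. Qed.

Definition vitali_class (x : R) : set R :=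
  [set y | `[0, 1]%classic y /\ rational (x - y)].

Definition vitali_rep (x : R) : R := xget 0 (vitali_class x).

Definition vitali_set : set R := range vitali_rep.

Lemma vitali_rep_class (x : R) : vitali_class x (vitali_rep x).
Proof.
apply: xgetPex; exists (x - (Num.floor x)%:~R); split.
  rewrite /= in_itv /= subr_ge0 floor_le /= lerBlDl.
  by have := floorD1_gt x; rewrite intrD addrC => /ltW.
by exists (Num.floor x)%:~R; rewrite ?subKr ?ratr_int.
Qed.

Lemma vitali_rep_eq (x x' : R) :
  rational (x - x') -> vitali_rep x = vitali_rep x'.
Proof.
move=> Qx; congr (xget 0 _); apply/funext => y; apply/propext.
split=> -[y01 Qy]; split => //.
  by rewrite (_ : x' - y = (x - y) - (x - x')); [exact: rationalB | ring].
by rewrite (_ : x - y = (x - x') + (x' - y)); [exact: rationalD | ring].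
Qed.

Lemma vitali_set01 : vitali_set `<=` `[0, 1]%classic.
Proof. by move=> _ [x _ <-]; have [] := vitali_rep_class x. Qed.

Lemma vitali_set_cover (x : R) : exists q : rat, vitali_set (x - ratr q).
Proof.
have [_ [q _ Eq]] := vitali_rep_class x; exists q.
by rewrite Eq opprB addrC subrK; exists x.
Qed.

Lemma vitali_set_rational_eq (v v' : R) : vitali_set v -> vitali_set v' ->
  rational (v - v') -> v = v'.
Proof.
move=> [x _ <-] [x' _ <-] Q; apply: vitali_rep_eq.
have [_ Qx] := vitali_rep_class x; have [_ Qx'] := vitali_rep_class x'.
rewrite (_ : x - x' = (x - vitali_rep x) + (vitali_rep x - vitali_rep x')
                     - (x' - vitali_rep x')); last by ring.
by apply: rationalB => //; apply: rationalD.
Qed.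

End vitali_set.

Section vitali_nonmeasurable.
Variable R : realType.
Local Notation lambda := (@lebesgue_outer R).

Lemma lebesgue_outer_itv (a b : R) :
  a <= b -> lambda `]a, b]%classic = (b - a)%:E.
Proof.
move=> ab; rewrite /lebesgue_outer measurable_mu_extE; last exact: is_ocitv.
exact: (@wlength_itv_bnd R idfun a b false false ab).
Qed.

Lemma natmul_bounded_eq0 (x : \bar R) (b : R) :
  (0 <= x)%E -> (forall n, x *+ n <= b%:E)%E -> x = 0%E.
Proof.
case: x => [r| |] //= r0 xb; last by have := xb 1%N; rewrite leye_eq.
move: r0; rewrite lee_fin le_eqVlt => /orP[/eqP<- //|r0].
have := xb (Num.truncn (b / r)).+1; rewrite -EFin_natmul lee_fin -mulr_natl.
have := truncnS_gt (b / r); rewrite ltr_pdivrMr // => lt_b.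
by rewrite leNgt lt_b.
Qed.

Lemma measurable_vitali_subset_null (M : set R) : M `<=` @vitali_set R ->
  measurable (M : set (LebesgueR R)) -> lambda M = 0%E.
Proof.
(* The translates of M by the rationals 1/(n+1) are pairwise disjoint, since
   the Vitali set meets each rational coset once, and lie in ]-1, 2]. *)
move=> MV mM; pose t (n : nat) : R := (n.+1%:R)^-1.
have t_rational n : rational (t n).
  by exists (n.+1%:R^-1); rewrite // fmorphV rmorph_nat.
have t_inj : injective t.
  by move=> n m /invr_inj /eqP; rewrite eqr_nat eqSS => /eqP.
have t01 n : 0 <= t n <= 1 by rewrite invr_ge0 ler0n invf_le1 ?ler1n ?ltr0n.
pose Mn n : set (LebesgueR R) := translate (t n) M.
apply: (natmul_bounded_eq0 (outer_measure_ge0 _ _) (b := 3)) => n.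
have Mn_disj : trivIset setT (fun i : 'I_n => Mn i).
  move=> i j _ _ [x [Mix Mjx]]; apply/val_inj/t_inj/oppr_inj/(addrI x).
  apply: vitali_set_rational_eq; [exact: MV|exact: MV|].
  by rewrite opprB addrC addrA subrK; apply: rationalB.
have Mn_sub k : Mn k `<=` `](-1), 2]%classic.
  move=> x /MV /vitali_set01; rewrite /= !in_itv /= => /andP[x0 x1].
  by have /andP[t0 t1] := t01 k; apply/andP; split; lra.
have -> : (lambda M *+ n = \sum_(i < n) completed_lebesgue_measure (Mn i))%E.
  rewrite (eq_bigr (fun=> lambda M)) ?sumr_const ?card_ord // => i _.
  exact: outer_translate.
rewrite -measure_bigsetU_ord //; last by move=> i; exact: measurable_translate.
have -> : 3%:E = lambda `](-1), 2]%classic.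
  by rewrite lebesgue_outer_itv; [congr EFin|]; lra.
by apply: (le_outer_measure lambda); rewrite -bigcup_mkord => x [k _ /Mn_sub].
Qed.

Lemma lebesgue_outer_null_negligible (B : set R) :
  measurable (B : set (LebesgueR R)) -> lambda B = 0%E ->
  (@lebesgue_measure R).-negligible B.
Proof.
move=> mB B_null.
have : completed_algebra_gen (@lebesgue_measure R) B.
  by rewrite -g_sigma_completed_algebra_genE completed_caratheodory_measurable.
move=> [A mA [N nN ANB]]; rewrite -ANB; apply: negligibleU => //.
exists A; split => //; apply/eqP; rewrite eq_le measure_ge0 andbT.
have : (lambda A <= lambda B)%E.
  by apply: (le_outer_measure lambda); rewrite -ANB; exact: subsetUl.
by rewrite B_null.
Qed.

Lemma negligible_measurable (N : set R) :
  (@lebesgue_measure R).-negligible N -> measurable (N : set (LebesgueR R)).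
Proof.
move=> [A [mA A0 NA]]; apply: negligible_sub_caratheodory.
by exists A; split => //; exact: sub_caratheodory.
Qed.

Lemma non_null01_nonmeasurable_subset (B : set R) : non_null01 B ->
  exists X : set R, X `<=` B /\ ~ measurable (X : set (LebesgueR R)).
Proof.
move=> [B01 nB]; apply: contrapT => /forallNP allm.
have mB X : X `<=` B -> measurable (X : set (LebesgueR R)).
  by move=> XB; have /not_andP[//|/contrapT] := allm X.
pose P n : set R := if @unpickle rat n is Some q
  then B `&` translate (ratr q) (@vitali_set R) else set0.
have P0 n : lambda (P n) = 0%E.
  rewrite /P; case: (unpickle n) => [q|]; last exact: outer_measure0.
  rewrite -(outer_translate (- ratr q)); apply: measurable_vitali_subset_null.
    by move=> y [_]; rewrite /translate /= opprK addrK.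
  by apply/measurable_translate/mB; exact: subIsetl.
have B_cover : B `<=` \bigcup_n P n.
  move=> x Bx; have [q Vq] := vitali_set_cover x.
  by exists (pickle q); rewrite /P ?pickleK.
apply/nB/lebesgue_outer_null_negligible; first exact: mB.
apply/eqP; rewrite eq_le outer_measure_ge0 andbT.
apply: le_trans (le_outer_measure lambda _ _ B_cover) _.
apply: le_trans (outer_measure_sigma_subadditive lambda P) _.
by rewrite eseries0 // => i _ _; exact: P0.
Qed.

End vitali_nonmeasurable.

Lemma well_order_total_order (T : eqType) (W : rel T) : wochoice.well_order W ->
  [/\ reflexive W, antisymmetric W, total W & transitive W].
Proof.
move=> Wwo; have Wc : wochoice.wo_chain W predT by apply: wochoice.withinW.
have Wref : reflexive W by move=> x; exact: (wochoice.wo_chain_reflexive Wc).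
have Want : antisymmetric W.
  by move=> x y; exact: (wochoice.wo_chain_antisymmetric Wc).
split=> // [x y|y x z Wxy Wyz]; first exact: (wochoice.wo_chainW Wc).
have [|m [[/= Am lbm] _]] := Wwo [pred t | (t == x) || (t == y) || (t == z)].
  by exists x; rewrite inE eqxx.
have Wmx : W m x by apply: lbm; rewrite inE eqxx.
have Wmy : W m y by apply: lbm; rewrite inE eqxx orbT.
have Wmz : W m z by apply: lbm; rewrite inE eqxx !orbT.
move: Am; rewrite inE => /orP[/orP[]|] /eqP Em; subst m => //.
- by have -> : x = y by apply: Want; rewrite Wxy Wmx.
- by have <- : y = z by apply: Want; rewrite Wyz Wmy.
Qed.

Lemma strict_wellorder_well_order (T : eqType) (W : rel T) :
  wochoice.well_order W -> strict_wellorder (fun x y => W x y && (x != y)).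
Proof.
move=> Wwo; have [_ Want Wtot Wtr] := well_order_total_order Wwo.
split; [|split; [|split]].
- by move=> x; rewrite eqxx andbF.
- move=> x y z /andP[Wxy nxy] /andP[Wyz nyz]; apply/andP; split.
    exact: Wtr Wxy Wyz.
  apply: contraNN nxy => /eqP Exz; rewrite -Exz in Wyz.
  by apply/eqP/Want; rewrite Wxy.
- move=> x y; have [->|nxy] := eqVneq x y; first by left.
  by right; have /orP[Wxy|Wyx] := Wtot x y; [left|right]; rewrite ?Wxy ?Wyx.
- move=> x; apply: contrapT => nAx.
  pose notAcc := [pred t | ~~ `[< Acc (fun x y => W x y && (x != y)) t >]].
  have [|m [[/= Am lbm] _]] := Wwo notAcc.
    by exists x; rewrite inE; apply/negP => /asboolP.
  move: Am; rewrite inE => /negP; apply; apply/asboolP.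
  constructor => y /andP[Wym nym]; apply: contrapT => nAy.
  have Wmy : W m y by apply: lbm; rewrite inE; apply/negP => /asboolP.
  by move/eqP: nym; apply; apply: Want; rewrite Wym Wmy.
Qed.

Lemma exists_strict_wellorder (T : eqType) :
  exists r : T -> T -> Prop, strict_wellorder r.
Proof.
have [W Wwo] := wochoice.well_ordering_principle T.
by eexists; exact: strict_wellorder_well_order Wwo.
Qed.

Lemma strict_wellorder_set_type (T : Type) (r : T -> T -> Prop) (A : set T) :
  strict_wellorder r -> strict_wellorder (fun i j : A => r (val i) (val j)).
Proof.
move=> [irr [tr [tot wf]]]; split; [|split; [|split]].
- by move=> i; apply: irr.
- by move=> i j k; apply: tr.
- by move=> i j; case: (tot (val i) (val j)) => [/val_inj|]; [left|right].
- have acc t : Acc r t -> forall i : A, val i = t ->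
      Acc (fun i j : A => r (val i) (val j)) i.
    elim=> {}t _ IH i it; constructor => j rji.
    by apply: (IH (val j)) => //; rewrite -it.
  by move=> i; exact: acc (wf (val i)) i erefl.
Qed.

Local Open Scope card_scope.

Lemma wf_greedy_card_le (T : Type) (U : pointedType) (r : T -> T -> Prop)
    (P : set T) (B : set U) : strict_wellorder r ->
  (forall (t : T) (h : T -> U), P t -> ~ B `<=` h @` [set u | r u t]) ->
  P #<= B.
Proof.
move=> [_ [_ [tot wf]]] PB.
pose next (t : T) (rec : forall u, r u t -> U) :=
  xget point [set b | B b /\ ~ (exists u (p : r u t), rec u p = b)].
pose h := Fix wf (fun _ => U) next.
pose fresh t := [set b | B b /\ ~ (h @` [set u | r u t]) b].
have hE t : h t = xget point (fresh t).
  rewrite /h Fix_eq; last first.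
    move=> x f g fg; suff -> : f = g by [].
    by do 2 apply: functional_extensionality_dep => ?; exact: fg.
  congr (xget _ _); apply/funext => b; apply/propext.
  split=> -[Bb nb]; split=> // -[u].
    by move=> ru E; apply: nb; exists u, ru.
  by move=> [p E]; apply: nb; exists u.
have hP t : P t -> B (h t) /\ ~ (h @` [set u | r u t]) (h t).
  move=> Pt; rewrite hE; apply: (@xgetPex _ point (fresh t)).
  apply: contrapT => /forallNP nb.
  by apply: (PB t h Pt) => b Bb; apply: contrapT => nhb; apply: (nb b).
apply/pcard_leP/injfunPex; exists h => [t /hP[]//|x y /[!inE] Px Py hxy].
apply: contrapT => nxy; have [//|[rxy|ryx]] := tot x y.
- by have [_] := hP y Py; apply; exists x.
- by have [_] := hP x Px; apply; exists y.
Qed.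

Lemma non_null01_itv01 (R : realType) : non_null01 (`[0, 1]%classic : set R).
Proof.
split => // -[A [mA A0 sA]].
have : (@lebesgue_measure R `[0%R, 1%R]%classic <= lebesgue_measure A)%E.
  by apply: le_measure; rewrite ?inE //; exact: measurable_itv.
by rewrite A0 lebesgue_measure_itv /= lte_fin ltr01 oppr0 adde0 leNgt lte01.
Qed.

Lemma non_null01_neq0 (R : realType) (B : set R) : non_null01 B -> B !=set0.
Proof.
move=> [_ nB]; apply/set0P/negP => /eqP B0.
by apply: nB; rewrite B0; exact: negligible_set0.
Qed.

Lemma wo_pointwise_cvg_eventually (R : realType) (I : Type) (r : I -> I -> Prop)
    (f : I -> R -> R) (g : R -> R) :
  (forall x, exists i0, forall i, r i0 i -> f i x = g x) -> wo_pointwise_cvg r f g.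
Proof.
move=> fg x e e0; have [i0 fgx] := fg x.
by exists i0 => i /fgx ->; rewrite subrr normr0.
Qed.

Lemma LIM_L_measurable (R : realType) (I : Type) {r : I -> I -> Prop} (i0 : I)
    (g : R -> R) : lebesgue_measurable_fun g -> LIM_L r g.
Proof.
move=> mg; exists (fun=> g); split=> //.
by apply: wo_pointwise_cvg_eventually; exists i0.
Qed.

Section short_points.
Variables (R : realType) (r : R -> R -> Prop).
Hypothesis r_wo : strict_wellorder r.

Definition short : set R := fun t =>
  forall B : set R, non_null01 B -> ~ (B #<= [set u | r u t]).

Lemma short_card_le (B : set R) : non_null01 B -> short #<= B.
Proof.
move=> nB; apply: wf_greedy_card_le r_wo _ => t h st BhS.
exact/(st B nB)/(card_le_trans (subset_card_le BhS))/card_image_le.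
Qed.

Lemma non_null01_card_le_short : exists2 B0 : set R, non_null01 B0 & B0 #<= short.
Proof.
have [all_short|/existsNP[t0 nt0]] := pselect (forall t, short t).
  exists `[0, 1]%classic; first exact: non_null01_itv01.
  by rewrite (_ : short = setT) ?card_leT //; apply/funext => t; apply/propext.
elim/(well_founded_ind r_wo.2.2.2): t0 nt0 => t IH.
move=> /existsNP[B /not_implyP[nB /contrapT Bt]].
have [below_short|/existsNP[u /not_implyP[rut nu]]] :=
  pselect ([set u | r u t] `<=` short).
  by exists B => //; exact: card_le_trans Bt (subset_card_le below_short).
exact: IH rut nu.
Qed.

Lemma short_neq0 : short !=set0.
Proof.
have [B0 nB0 B0short] := non_null01_card_le_short.
apply/set0P/negP => /eqP short0; have /set0P/negP := non_null01_neq0 nB0; apply.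
by rewrite -(@card_le0 _ R) -short0.
Qed.

Definition short_lt (i j : short) : Prop := r (val i) (val j).

Lemma card_le_short_lt (i : short) :
  [set j | short_lt j i] #<= [set u | r u (val i)].
Proof. by apply/pcard_leP/injfunPex; exists val => // j k _ _ /val_inj. Qed.

Lemma order_type_short : order_type_nonN R short_lt.
Proof.
have [B0 nB0 B0short] := non_null01_card_le_short.
split; [exact: strict_wellorder_set_type|split; [|split]].
- exists B0; split => //.
  by rewrite (card_eql (card_setT _)) card_eq_le short_card_le.
- by move=> B nB; rewrite (card_le_eql (card_setT _)); exact: short_card_le.
- move=> i segi; apply: (set_valP i B0 nB0).
  rewrite -(card_le_eqr (card_setT short)) in B0short.
  exact: card_le_trans B0short (card_le_trans segi (card_le_short_lt i)).
Qed.

Lemma LIM_L_short_nonmeasurable :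
  exists g : R -> R, LIM_L short_lt g /\ ~ lebesgue_measurable_fun g.
Proof.
have [B0 nB0 B0short] := non_null01_card_le_short.
have [psi psi_short psi_inj] :
    exists2 psi : R -> R, set_fun B0 short psi & set_inj B0 psi.
  exact/injfunPex/pcard_leP.
have [X [XB0 nmX]] := non_null01_nonmeasurable_subset nB0.
pose below (i : short) := [set x | X x /\ r (psi x) (val i)].
have below_null i : (@lebesgue_measure R).-negligible (below i).
  apply: contrapT => nneg; apply: (set_valP i (below i)).
    by split => // x [/XB0 /(proj1 nB0)].
  apply/pcard_leP/injfunPex; exists psi => [x []//|x y].
  by rewrite !inE => -[Xx _] [Xy _]; apply: psi_inj; rewrite inE; exact: XB0.
exists \1_X; split; last by move/measurable_indicP.
exists (fun i => \1_(below i)); split.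
  by move=> i; apply/measurable_indicP/negligible_measurable.
have [t0 st0] := short_neq0.
apply: wo_pointwise_cvg_eventually => x; have [Xx|nXx] := pselect (X x).
  exists (SigSub (mem_set (psi_short x (XB0 x Xx)))) => i rxi.
  by rewrite !indicE !mem_set.
by exists (SigSub (mem_set st0)) => i _; rewrite !indicE !memNset // => -[].
Qed.

End short_points.

Theorem mainTheorem19 (R : realType) :
  exists (I : Type) (r : I -> I -> Prop),
    order_type_nonN R r /\
    (forall g : R -> R, lebesgue_measurable_fun g -> LIM_L r g) /\
    (exists g : R -> R, LIM_L r g /\ ~ lebesgue_measurable_fun g).
Proof.
have [r r_wo] := exists_strict_wellorder R.
have [t0 st0] := short_neq0 r_wo.
exists (short r), (short_lt (r := r)); split; first exact: order_type_short.
split; last exact: LIM_L_short_nonmeasurable.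
pose i0 : short r := SigSub (mem_set st0).
by move=> g mg; exact: (LIM_L_measurable i0 mg).
Qed.
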